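(* Let $1\le r\le n$ and let $\mathsf{X}\in\mathbb{R}^{n\times r}$ have unit-norm, linearly independent columns. Let $Y$ be the random subset of $\{1,\dots,n\}$ associated with $|\mathrm{columns}(\mathsf{X})\rangle$, as defined in the context. Then, for every $\mathtt{C}\subseteq\{1,\dots,n\}$ with $|\mathtt{C}|=r$, $$\mathbb{P}\big(Y=\mathtt{C}\,\big|\,|Y|=r\big)=\frac{|\det \mathsf{X}_{\mathtt{C}:}|^2}{\det(\mathsf{X}^\top\mathsf{X})}.$$
   Context: Work in $(\mathbb{C}^2)^{\otimes n}$ with computational basis $|b_1\dots b_n\rangle$, $b_i\in\{0,1\}$, where $|0\rangle=(1,0)^\top$ and $|1\rangle=(0,1)^\top$. For $1\le j\le n$, let $c_j=\sigma_z^{\otimes(j-1)}\otimes|0\rangle\langle 1|\otimes I^{\otimes(n-j)}$, with $\sigma_z=\mathrm{diag}(1,-1)$ and $I$ the $2\times2$ identity. Let $c_j^*$ be its adjoint. The vacuum is $|\emptyset\rangle=|0\cdots0\rangle$. For a unit vector $x\in\mathbb{R}^n$, the Clifford loader is $\mathcal{C}(x)=\sum_{i=1}^n x_i(c_i+c_i^* )$; it is a unitary. For $\mathsf{X}\in\mathbb{R}^{n\times r}$ with unit-norm columns $\mathsf{X}_{:1},\dots,\mathsf{X}_{:r}$, set $|\mathrm{columns}(\mathsf{X})\rangle=\mathcal{C}(\mathsf{X}_{:1})\cdots\mathcal{C}(\mathsf{X}_{:r})|\emptyset\rangle$. The associated random subset $Y\subseteq\{1,\dots,n\}$ has law $\mathbb{P}(Y=\mathtt{C})=|\langle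 e_{\mathtt{C}}|\mathrm{columns}(\mathsf{X})\rangle|^2$, where $|e_{\mathtt{C}}\rangle=|b_1\dots b_n\rangle$ with $b_i=1$ iff $i\in\mathtt{C}$. This is the Born-rule outcome of measuring the occupation numbers $N_i=c_i^*c_i$. For $\mathtt{C}$ with $|\mathtt{C}|=r$, $\mathsf{X}_{\mathtt{C}:}$ is the $r\times r$ submatrix of $\mathsf{X}$ with rows indexed by $\mathtt{C}$. *)

From mathcomp Require Import all_boot all_order all_algebra.
Set Implicit Arguments. Unset Strict Implicit. Unset Printing Implicit Defensive.
Import Order.TTheory GRing.Theory Num.Theory.
Local Open Scope ring_scope.

(* The computational basis |b_1 ... b_n> of (C^2)^{(x)n} is indexed by the
   subset C = {i | b_i = 1} of 'I_n (0-based positions).  All operators below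
   have real entries (X is real), so we work over a real field R; the adjoint
   is then the transpose and |amplitude|^2 = amplitude^2. *)

Section Fock.
Variables (R : realFieldType) (n : nat).

Definition fstate := {set 'I_n} -> R.
Definition fop := {set 'I_n} -> {set 'I_n} -> R.

Definition fapply (A : fop) (v : fstate) : fstate :=
  fun C => \sum_(D : {set 'I_n}) A C D * v D.

Definition fadj (A : fop) : fop := fun C D => A D C.

(* c_j = sigma_z^{(x)(j-1)} (x) |0><1| (x) I^{(x)(n-j)}, written entrywise:
   <e_C| c_j |e_D> = (-1)^{#{i in C, i < j}} if j \notin C and D = C u {j},
   and 0 otherwise. *)
Definition annih (j : 'I_n) : fop := fun C D =>
  if (j \notin C) && (D == j |: C)
  then (-1) ^+ #|[set i in C | (i < j)%N]| else 0.

Definition clifford (x : 'I_n -> R) : fop :=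
  fun C D => \sum_(i < n) x i * (annih i C D + fadj (annih i) C D).

Definition vacuum : fstate := fun C => if C == set0 then 1 else 0.

Definition columns_state (r : nat) (X : 'M[R]_(n, r)) : fstate :=
  foldr (fun j v => fapply (clifford (fun i => X i j)) v) vacuum (enum 'I_r).

Definition born_prob (r : nat) (X : 'M[R]_(n, r)) (C : {set 'I_n}) : R :=
  (columns_state X C) ^+ 2.

Definition cond_prob_size (r : nat) (X : 'M[R]_(n, r)) (k : nat)
  (C : {set 'I_n}) : R :=
  (if #|C| == k then born_prob X C else 0)
  / \sum_(D : {set 'I_n} | #|D| == k) born_prob X D.

(* X_{C:} : the r x r submatrix of rows indexed by C, in increasing order *)
Definition row_submx (r : nat) (X : 'M[R]_(n, r)) (C : {set 'I_n})
  (HC : #|C| = r) : 'M[R]_r :=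
  \matrix_(i < r, j < r) X (enum_val (cast_ord (esym HC) i)) j.

End Fock.

(* After k Clifford loaders the state is supported on sets of size at most k,
   and its amplitude on a set D of size exactly k is the minor of the loaded
   vectors on the rows D: each loader removes one element of D, and the
   fermionic sign (-1)^#{i in D | i < j} is the sign of the corresponding
   cofactor in the Laplace expansion along the first column.  Hence
   P(Y = D) = det(X_{D:})^2 for |D| = r, and by Cauchy-Binet these squared
   minors sum to det(X^T X). *)

From mathcomp Require Import all_boot all_order all_algebra.
From mathcomp Require Import fingroup perm.
Import Order.TTheory GRing.Theory.
Local Open Scope ring_scope.
Set Implicit Arguments. Unset Strict Implicit. Unset Printing Implicit Defensive.

Section SetRank.
Variable n : nat.
Implicit Types (D : {set 'I_n}) (x y z : 'I_n).

Definition set_rank D y := #|[set k in D | (k < y)%N]|.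

Lemma set_rank_setD1 D x y :
  set_rank (D :\ x) y = (set_rank D y - ((x \in D) && (x < y)%N))%N.
Proof.
rewrite /set_rank.
have -> : [set k in D :\ x | (k < y)%N] = [set k in D | (k < y)%N] :\ x.
  by apply/setP => k; rewrite !inE andbA.
rewrite (cardsD1 x [set k in D | (k < y)%N]) !inE.
by case: (_ && _); rewrite ?subn0 // add1n subn1.
Qed.

Lemma set_rank_mono D y z : y \in D -> (y < z)%N -> (set_rank D y < set_rank D z)%N.
Proof.
move=> yD yz; apply: proper_card; rewrite properE; apply/andP; split.
  by apply/subsetP => k; rewrite !inE => /andP[-> /ltn_trans ->].
by apply/subsetPn; exists y; rewrite !inE ?yD ?yz ?ltnn.
Qed.

Lemma sorted_enum_set D : sorted <%O (enum D).
Proof.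
have -> : enum D = [seq x <- enum 'I_n | x \in D].
  by rewrite enumT /enum_mem; apply: eq_filter => x; rewrite !inE.
apply: lt_sorted_filter.
by have := iota_ltn_sorted 0 n; rewrite -val_enum_ord sorted_map.
Qed.

Lemma set_rank_nth_enum D x0 (a : nat) :
  (a < #|D|)%N -> set_rank D (nth x0 (enum D) a) = a.
Proof.
rewrite cardE => aD; rewrite -[RHS](size_takel (ltnW aD)).
rewrite -(filter_lt_nth x0 (sorted_enum_set D)) //.
rewrite -(card_uniqP (filter_uniq _ (enum_uniq _))); apply/eq_card => k.
by rewrite !inE mem_filter mem_enum andbC.
Qed.

Definition ordered_enum (k : nat) D (e : 'I_k -> 'I_n) :=
  #|D| = k /\ forall a, e a \in D /\ set_rank D (e a) = a.

Definition set_enum (k : nat) x0 D (a : 'I_k) : 'I_n := nth x0 (enum D) a.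

Lemma ordered_set_enum (k : nat) x0 D :
  #|D| = k -> ordered_enum D (set_enum x0 D : 'I_k -> _).
Proof.
move=> cD; split=> // a; have aD : (a < #|D|)%N by rewrite cD.
by rewrite -mem_enum mem_nth -?cardE // set_rank_nth_enum.
Qed.

Section OrderedEnum.
Variables (k : nat) (D : {set 'I_n}) (e : 'I_k -> 'I_n).
Hypothesis eD : ordered_enum D e.

Lemma ordered_enum_inj : injective e.
Proof.
case: eD => _ eDP a b eab; apply: val_inj.
by rewrite /= -(eDP a).2 -(eDP b).2 eab.
Qed.

Lemma ordered_enum_mono : {mono e : a b / (a < b)%N}.
Proof.
case: eD => _ eDP a b; have [[aD ra] [bD rb]] := (eDP a, eDP b).
case: (ltngtP (e a) (e b)) => [lt|lt|/val_inj eq].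
- by rewrite -ra -rb set_rank_mono.
- by apply/esym/negbTE; rewrite -leqNgt ltnW // -rb -ra set_rank_mono.
- by rewrite -ra -rb eq ltnn.
Qed.

Lemma big_ordered_enum (V : nmodType) (F : 'I_n -> V) :
  \sum_(i in D) F i = \sum_(a < k) F (e a).
Proof.
have [cD eDP] := eD; have einj := ordered_enum_inj.
have -> : D = e @: setT.
  apply/eqP; rewrite eq_sym eqEcard; apply/andP; split.
    by apply/subsetP => y /imsetP[a _ ->]; case: (eDP a).
  by rewrite card_imset ?cardsT ?card_ord ?cD.
rewrite big_imset; last exact: in2W einj.
by apply: eq_bigl => a; rewrite in_setT.
Qed.

End OrderedEnum.

Lemma ordered_enum_lift (k : nat) D (e : 'I_k.+1 -> 'I_n) a :
  ordered_enum D e -> ordered_enum (D :\ e a) (e \o lift a).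
Proof.
move=> eD; have [cD eDP] := eD; have einj := ordered_enum_inj eD.
split=> [|b /=]; first by move: cD; rewrite (cardsD1 (e a)) (eDP a).1 add1n => -[].
rewrite !inE (inj_eq einj) eq_sym neq_lift (eDP _).1; split=> //.
rewrite set_rank_setD1 (eDP a).1 (eDP _).2 (ordered_enum_mono eD) /= /bump.
case: (leqP a b) => h /=.
- by rewrite add1n ltnS h subn1.
- by rewrite add0n ltnNge ltnW ?subn0.
Qed.

End SetRank.

Lemma clifford_apply (R : realFieldType) (n : nat) (x : 'I_n -> R) (v : fstate R n)
    (D : {set 'I_n}) :
  fapply (clifford x) v D =
    \sum_(i in D) x i * (-1) ^+ set_rank D i * v (D :\ i)
  + \sum_(i | i \notin D) x i * (-1) ^+ set_rank D i * v (i |: D).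
Proof.
rewrite /fapply /clifford; under eq_bigr do rewrite big_distrl.
rewrite exchange_big (bigID (mem D)) /=; congr (_ + _); apply: eq_bigr => i iD.
- rewrite (bigD1 (D :\ i)) //= big1 => [|E nE]; rewrite /fadj /annih iD /=.
    rewrite !inE eqxx setD1K // eqxx add0r addr0.
    by rewrite -/(set_rank _ _) set_rank_setD1 iD ltnn subn0.
  case iE: (i \in E); rewrite /= ?add0r ?mulr0 ?mul0r //.
  case: eqP => [DE|_]; last by rewrite mulr0 mul0r.
  by move: nE; rewrite DE setU1K ?iE ?eqxx.
- rewrite (bigD1 (i |: D)) //= big1 => [|E nE]; rewrite /fadj /annih (negbTE iD) /=.
    by rewrite eqxx setU11 /= !addr0.
  rewrite (negbTE nE) add0r; case: eqP => [DE|_]; last by rewrite andbF mulr0 mul0r.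
  by move: iD; rewrite DE setU11.
Qed.

Section LoaderState.
Variables (R : realFieldType) (n : nat).
Implicit Types (s : seq ('I_n -> R)) (D : {set 'I_n}).

Definition loader_state (s : seq ('I_n -> R)) : fstate R n :=
  foldr (fun x v => fapply (clifford x) v) (@vacuum R n) s.

Lemma loader_state_card_gt s D : (size s < #|D|)%N -> loader_state s D = 0.
Proof.
elim: s D => [|x s IH] D /= lt_s_D.
  by rewrite /vacuum; case: eqP => // D0; rewrite D0 cards0 in lt_s_D.
rewrite clifford_apply !big1 ?addr0 // => i iD; rewrite IH ?mulr0 //.
- by rewrite cardsU1 iD add1n ltnW // ltnS ltnW.
- by move: lt_s_D; rewrite (cardsD1 i D) iD add1n ltnS.
Qed.

Lemma loader_state_ordered_enum (k : nat) s D (e : 'I_k -> 'I_n) :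
  size s = k -> ordered_enum D e ->
  loader_state s D = \det (\matrix_(a, b) nth (fun _ => 0) s b (e a)).
Proof.
move=> sk; subst k; elim: s D e => [|x s IH] D e /= eD; have [cD _] := eD.
  by rewrite det_mx00 /vacuum; move/eqP: cD; rewrite cards_eq0 => ->.
rewrite clifford_apply [X in _ + X]big1 ?addr0; last first.
  by move=> i iD; rewrite loader_state_card_gt ?mulr0 // cardsU1 iD cD.
rewrite (big_ordered_enum eD) (expand_det_col _ ord0); apply: eq_bigr => a _.
have [_ /(_ a)[_ ->]] := eD; rewrite mxE /cofactor addn0 -mulrA; congr (_ * (_ * _)).
rewrite (IH _ _ (ordered_enum_lift a eD)); congr (\det _).
by apply/matrixP => i j; rewrite !mxE lift0.
Qed.

End LoaderState.

Lemma det_mulmx_ffun (R : comNzRingType) (r n : nat) (A : 'M[R]_(r, n))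
    (B : 'M[R]_(n, r)) :
  \det (A *m B) =
    \sum_(f : {ffun 'I_r -> 'I_n}) (\prod_i A i (f i)) * \det (rowsub f B).
Proof.
rewrite /determinant.
transitivity (\sum_(s : 'S_r) \sum_(f : {ffun 'I_r -> 'I_n})
   (-1) ^+ s * \prod_i (A i (f i) * B (f i) (s i))).
  apply: eq_bigr => s _; rewrite -big_distrr /=; congr (_ * _).
  rewrite -(bigA_distr_bigA (fun i k => A i k * B k (s i))) /=.
  by apply: eq_bigr => i _; rewrite mxE.
rewrite exchange_big /=; apply: eq_bigr => f _.
rewrite big_distrr /=; apply: eq_bigr => s _.
by rewrite big_split /= mulrCA; congr (_ * (_ * _)); apply: eq_bigr => i _; rewrite mxE.
Qed.

Lemma sum_injections_onto (V : nmodType) (r n : nat) (i0 : 'I_n) (D : {set 'I_n})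
    (F : {ffun 'I_r -> 'I_n} -> V) :
  #|D| = r ->
  \sum_(f : {ffun 'I_r -> 'I_n} | injectiveb f && ([set f i | i in 'I_r] == D)) F f =
    \sum_(p : 'S_r) F [ffun i => set_enum i0 D (p i)].
Proof.
move=> cD; set e := set_enum i0 D; have eD := ordered_set_enum i0 cD.
have einj : injective e := ordered_enum_inj eD.
pose h (p : 'S_r) := [ffun i => e (p i)].
have hinj : injective h.
  move=> p q /ffunP hpq; apply/permP => i; apply: einj.
  by have := hpq i; rewrite !ffunE.
rewrite -[RHS](big_imset _ (in2W hinj)) /=; apply: eq_bigl => f.
apply/andP/imsetP => [[/injectiveP finj /eqP fD]|[p _ ->]].
  have fiD i : f i \in enum D by rewrite mem_enum -fD imset_f.
  have gP i : (index (f i) (enum D) < r)%N.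
    by rewrite -[X in (_ < X)%N]cD cardE index_mem.
  pose g i := Ordinal (gP i).
  have ginj : injective g.
    move=> i j /(congr1 val) /= eij; apply: finj.
    by rewrite -(nth_index i0 (fiD i)) eij nth_index.
  exists (perm ginj) => //; apply/ffunP => i.
  by rewrite !ffunE permE /e /set_enum nth_index.
have hpinj : injective (h p) by move=> i j; rewrite !ffunE => /einj /perm_inj.
split; first exact/injectiveP.
rewrite eqEcard card_imset // card_ord cD leqnn andbT.
apply/subsetP => y /imsetP[i _ ->]; rewrite ffunE.
by have [_ /(_ (p i))[]] := eD.
Qed.

Theorem cauchy_binet (R : comNzRingType) (r n : nat) (i0 : 'I_n)
    (A : 'M[R]_(r, n)) (B : 'M[R]_(n, r)) :
  \det (A *m B) = \sum_(D : {set 'I_n} | #|D| == r)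
     \det (colsub (set_enum i0 D) A) * \det (rowsub (set_enum i0 D) B).
Proof.
rewrite det_mulmx_ffun (bigID (fun f : {ffun 'I_r -> 'I_n} => injectiveb f)) /=.
rewrite [X in _ + X]big1 ?addr0.
  rewrite (partition_big (fun f : {ffun 'I_r -> 'I_n} => [set f i | i in 'I_r])
                         (fun D => #|D| == r)) /=.
    apply: eq_bigr => D /eqP cD; rewrite (sum_injections_onto i0) //.
    set e := set_enum i0 D.
    rewrite [X in _ = X * _]/determinant big_distrl /=; apply: eq_bigr => p _.
    have -> : rowsub [ffun i => e (p i)] B = row_perm p (rowsub e B).
      by apply/matrixP => i j; rewrite !mxE ffunE.
    have -> : \prod_i A i ([ffun i => e (p i)] i) = \prod_i colsub e A i (p i).
      by apply: eq_bigr => i _; rewrite !mxE ffunE.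
    by rewrite row_permE det_mulmx det_perm mulrCA mulrA.
  by move=> f /injectiveP finj; rewrite card_imset // card_ord.
move=> f /injectivePn[i1 [i2 i12 fi12]].
by rewrite (determinant_alternate i12) ?mulr0 // => j; rewrite !mxE fi12.
Qed.

Lemma columns_state_det (R : realFieldType) (n r : nat) (i0 : 'I_n)
    (X : 'M[R]_(n, r)) (D : {set 'I_n}) :
  #|D| = r -> columns_state X D = \det (rowsub (set_enum i0 D) X).
Proof.
move=> cD; have -> : columns_state X D =
    loader_state [seq (fun i => X i j) | j <- enum 'I_r] D.
  by rewrite /columns_state /loader_state foldr_map.
rewrite (loader_state_ordered_enum _ (ordered_set_enum i0 cD)); last first.
  by rewrite size_map -cardE card_ord.
apply: congr1; apply/matrixP => a b.
by rewrite !mxE (nth_map b) ?nth_ord_enum ?size_enum_ord.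
Qed.

Theorem mainTheorem1 (R : realFieldType) (n r : nat) (X : 'M[R]_(n, r))
  (Hr1 : (1 <= r)%N) (Hrn : (r <= n)%N)
  (Hunit : forall j : 'I_r, \sum_(i < n) X i j ^+ 2 = 1)
  (Hindep : \rank X = r)
  (C : {set 'I_n}) (HC : #|C| = r) :
  cond_prob_size X r C = (\det (row_submx X HC)) ^+ 2 / \det (X^T *m X).
Proof.
have i0 : 'I_n := Ordinal (leq_trans Hr1 Hrn).
have -> : row_submx X HC = rowsub (set_enum i0 C) X.
  by apply/matrixP => a b; rewrite !mxE (enum_val_nth i0).
rewrite /cond_prob_size HC eqxx /born_prob (columns_state_det i0 X HC) (cauchy_binet i0).
congr (_ / _); apply: eq_bigr => D /eqP cD.
by rewrite (columns_state_det i0 X cD) -trmx_mxsub det_tr expr2.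
Qed.
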